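(* Let $\phi\in X$ and let $u$ be the global viscosity solution of (VHJ). Let $\omega$ be an open subset of $\Omega$, $t_2>t_1\ge0$, $Q=\omega\times(t_1,t_2)$. Assume $w\in C^{2,1}(Q)\cap C(\overline Q)$ satisfies $w_t-\Delta w\ge|\nabla w|^p$ in $Q$, $w\ge0$ on $(\overline\omega\cap\partial\Omega)\times(t_1,t_2)$, $w\ge u$ on $(\Omega\cap\partial\omega)\times(t_1,t_2)$, and $w(\cdot,t_1)\ge u(\cdot,t_1)$ in $\omega$. Then $w\ge u$ in $\overline Q$.
   Context: $\Omega\subset\mathbb R^n$ smoothly bounded, $p>2$. (VHJ): $u_t-\Delta u=|\nabla u|^p$ in $\Omega\times(0,\infty)$, $u=0$ on $\partial\Omega\times(0,\infty)$, $u(\cdot,0)=\phi$. $X=\{\phi\in C^1(\overline\Omega):\phi\ge0,\ \phi=0\text{ on }\partial\Omega\}$. The global viscosity solution $u\in C(\overline\Omega\times[0,\infty))$ is the pointwise nondecreasing limit, as $k\to\infty$, of the global classical solutions $u_k$ of the truncated problems $\partial_tu_k-\Delta u_k=F_k(|\nabla u_k|^2)$ in $\Omega\times(0,\infty)$, $u_k=0$ on $\partial\Omega$, $u_k(\cdot,0)=\phi$, where $F_k(s)=\min(s^{p/2},k^{(p-2)/2}s)$; in particular $u$ may be positive on parts of $\partial\Omega$. *)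

From HB Require Import structures.
From mathcomp Require Import all_boot all_order all_algebra.
From mathcomp Require Import all_classical all_reals all_analysis.
Set Implicit Arguments. Unset Strict Implicit. Unset Printing Implicit Defensive.
Import Order.TTheory GRing.Theory Num.Theory.
Import numFieldNormedType.Exports.
Local Open Scope classical_set_scope.
Local Open Scope ring_scope.

Section VHJ.
Variables (R : realType) (n : nat).
Notation V := 'rV[R]_n.

Definition evec (i : 'I_n) : V := delta_mx 0 i.

Definition partial (f : V -> R) (i : 'I_n) (x : V) : R := derive f x (evec i).

Definition gradsq (f : V -> R) (x : V) : R := \sum_(i < n) (partial f i x) ^+ 2.

Definition lap (f : V -> R) (x : V) : R :=
  \sum_(i < n) partial (partial f i) i x.

Fixpoint iterD (s : seq V) (f : V -> R) : V -> R :=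
  match s with
  | [::] => f
  | v :: s' => fun x => derive (iterD s' f) x v
  end.

Definition smooth (f : V -> R) : Prop :=
  forall s : seq V, continuous (iterD s f) /\
    (forall (v x : V), derivable (iterD s f) x v).

(* Omega is a bounded open set with C^infty boundary (local defining function) *)
Definition smoothly_bounded (Om : set V) : Prop :=
  open Om /\ bounded_set Om /\
  forall x0, (closure Om `\` Om) x0 ->
    exists (r : R) (rho : V -> R), 0 < r /\ smooth rho /\
      (exists i, partial rho i x0 != 0) /\
      forall x, ball x0 r x -> (Om x <-> rho x < 0).

Definition C1_closure (Om : set V) (f : V -> R) : Prop :=
  {within closure Om, continuous f} /\
  (forall x, Om x -> forall v, derivable f x v) /\
  forall i, exists g : V -> R, {within closure Om, continuous g} /\
    forall x, Om x -> g x = partial f i x.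

Definition Xdata (Om : set V) (phi : V -> R) : Prop :=
  C1_closure Om phi /\ (forall x, closure Om x -> 0 <= phi x) /\
  (forall x, (closure Om `\` Om) x -> phi x = 0).

Definition dt (w : V -> R -> R) (x : V) (t : R) : R := derive1 (fun s => w x s) t.
Definition dx (w : V -> R -> R) (i : 'I_n) (x : V) (t : R) : R :=
  partial (fun y => w y t) i x.
Definition dxx (w : V -> R -> R) (i j : 'I_n) (x : V) (t : R) : R :=
  partial (fun y => dx w i y t) j x.
Definition gradsq_x (w : V -> R -> R) (x : V) (t : R) : R := gradsq (fun y => w y t) x.
Definition lap_x (w : V -> R -> R) (x : V) (t : R) : R := lap (fun y => w y t) x.

Definition uncurry2 (w : V -> R -> R) : V * R -> R := fun z => w z.1 z.2.

Definition C21 (D : set V) (I : set R) (w : V -> R -> R) : Prop :=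
  forall x t, D x -> I t ->
    [/\ derivable (fun s => w x s) t 1,
        (forall v, derivable (fun y => w y t) x v),
        (forall i v, derivable (fun y => dx w i y t) x v),
        {for (x, t), continuous (uncurry2 w)} &
        [/\
        {for (x, t), continuous (uncurry2 (dt w))},
        (forall i, {for (x, t), continuous (uncurry2 (dx w i))}) &
        (forall i j, {for (x, t), continuous (uncurry2 (dxx w i j))})]].

Definition Cset (A : set (V * R)) (w : V -> R -> R) : Prop :=
  {within A, continuous (uncurry2 w)}.

Definition C10 (A B : set (V * R)) (w : V -> R -> R) : Prop :=
  forall i, exists g : V -> R -> R, Cset A g /\
    forall x t, B (x, t) -> g x t = dx w i x t.

Definition Fk (p : R) (k : nat) (s : R) : R :=
  Num.min (s `^ (p / 2)) ((k%:R) `^ ((p - 2) / 2) * s).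

Definition trunc_classical_sol (Om : set V) (p : R) (k : nat) (phi : V -> R)
    (uk : V -> R -> R) : Prop :=
  C21 Om [set t | 0 < t] uk /\
  Cset (closure Om `*` [set t | 0 <= t]) uk /\
  C10 (closure Om `*` [set t | 0 < t]) (Om `*` [set t | 0 < t]) uk /\
  (forall x t, Om x -> 0 < t ->
     dt uk x t - lap_x uk x t = Fk p k (gradsq_x uk x t)) /\
  (forall x t, (closure Om `\` Om) x -> 0 < t -> uk x t = 0) /\
  (forall x, Om x -> uk x 0 = phi x).

(* u is the global viscosity solution of (VHJ): the pointwise nondecreasing limit
   of the global classical solutions u_k of the truncated problems *)
Definition global_viscosity_sol (Om : set V) (p : R) (phi : V -> R)
    (u : V -> R -> R) : Prop :=
  exists uk : nat -> V -> R -> R,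
    (forall k, trunc_classical_sol Om p k phi (uk k)) /\
    (forall x t, closure Om x -> 0 <= t ->
       {homo (fun k => uk k x t) : k l / (k <= l)%N >-> k <= l} /\
       (fun k => uk k x t) @ \oo --> u x t).

End VHJ.

From HB Require Import structures.
From mathcomp Require Import all_boot all_order all_algebra.
From mathcomp Require Import all_classical all_reals all_analysis.
From mathcomp Require Import lra.
Import Order.TTheory GRing.Theory Num.Theory.
Import numFieldNormedType.Exports.
Local Open Scope classical_set_scope.
Local Open Scope ring_scope.

(* Since F_k(s) <= s^(p/2), each truncated solution u_k is a classical
   subsolution of (VHJ), and u_k <= u gives u_k <= w on the parabolic boundary
   of Q (on the part of the boundary of omega lying in the boundary of Omega
   because u_k = 0 there).  A classical comparison principle then yields
   u_k <= w in Q: at a maximum (x0, t0) of u_k - w - eps (t - t1) over the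
   compact cylinder with x0 in omega and t0 > t1, the space gradients agree
   and the Laplacian of the difference is nonpositive, so its time derivative
   is nonpositive, while maximality in time forces it to be at least eps.
   Letting eps -> 0 and k -> oo gives u <= w. *)

Section DirectionalDerivative.
Variables (R : realType) (V : normedModType R).
Implicit Types (f H : V -> R) (x v : V).

Lemma derive_le_right f x v (c : R) : derivable f x v ->
  (\forall h \near (0:R), 0 < h -> f (h *: v + x) - f x <= c * h) ->
  derive f x v <= c.
Proof.
move=> df hn.
rewrite /derive (cvg_at_rightE (fun h : R => h^-1 *: ((f \o shift x) (h *: v) - f x))) //.
apply: limr_le.
  rewrite -(cvg_at_rightE (fun h : R => h^-1 *: ((f \o shift x) (h *: v) - f x))) //.
  apply: cvg_trans df; apply: cvg_app.
  move=> A [e egt0 Ae]; exists e => // y ye ygt0; apply: Ae => //.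
  exact/lt0r_neq0.
move: hn => [e e0 He]; exists e => // h he hgt0.
rewrite /= /GRing.scale /= mulrC ler_pdivrMr //; exact: He.
Qed.

Lemma derive_ge_left f x v (c : R) : derivable f x v ->
  (\forall h \near (0:R), h < 0 -> f (h *: v + x) - f x <= c * h) ->
  c <= derive f x v.
Proof.
move=> df hn.
rewrite /derive (cvg_at_leftE (fun h : R => h^-1 *: ((f \o shift x) (h *: v) - f x))) //.
apply: limr_ge.
  rewrite -(cvg_at_leftE (fun h : R => h^-1 *: ((f \o shift x) (h *: v) - f x))) //.
  apply: cvg_trans df; apply: cvg_app.
  move=> A [e egt0 Ae]; exists e => // y ye ygt0; apply: Ae => //.
  exact/ltr0_neq0.
move: hn => [e e0 He]; exists e => // h he hgt0.
rewrite /= /GRing.scale /= mulrC ler_ndivlMr //; exact: He.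
Qed.

Lemma near_line {P : set V} {x} v :
  (\forall y \near x, P y) -> \forall h \near (0:R), P (h *: v + x).
Proof.
suff : (fun h : R => h *: v + x) @ (0:R) --> x by apply.
rewrite -[X in _ --> X](add0r x) -[X in _ --> X + _](scale0r v).
by apply: cvgD; [apply: cvgZ; [exact: cvg_id | exact: cvg_cst] | exact: cvg_cst].
Qed.

Lemma derive_local_max f x v : derivable f x v ->
  (\forall y \near x, f y <= f x) -> derive f x v = 0.
Proof.
move=> df /(near_line v) hn; apply/eqP; rewrite eq_le; apply/andP; split.
  by apply: derive_le_right => //; apply: filterS hn => h hh _; rewrite mul0r subr_le0.
by apply: derive_ge_left => //; apply: filterS hn => h hh _; rewrite mul0r subr_le0.
Qed.

Lemma is_derive_line f x v (s : R) : derivable f (s *: v + x) v ->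
  is_derive s 1 (fun r : R => f (r *: v + x)) (derive f (s *: v + x) v).
Proof.
have E : (fun h : R => h^-1 *: (((fun r : R => f (r *: v + x)) \o shift s) (h *: 1)
                                 - f (s *: v + x)))
       = (fun h : R => h^-1 *: ((f \o shift (s *: v + x)) (h *: v) - f (s *: v + x))).
  apply: funext => h /=; congr (_ *: (f _ - _)).
  by rewrite /shift /= [h *: 1]mulr1 scalerDl addrA.
by move=> df; split; rewrite ?/derivable ?/derive E.
Qed.

(* If [derive H x v > 0], then by the mean value theorem on the line through [x]
   the function [f] would increase along [v] just after [x]. *)
Lemma derive2_local_max f H x v :
  (\forall y \near x, [/\ f y <= f x, derivable f y v & derive f y v = H y]) ->
  derivable H x v -> derive H x v <= 0.
Proof.
move=> hn dH; rewrite leNgt; apply/negP => DH0.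
have [_ dfx Hx] := nbhs_singleton hn.
have Hx0 : H x = 0.
  by rewrite -Hx; apply: derive_local_max => //; apply: filterS hn => y [].
have q0 : \forall h \near (0:R)^', 0 < h^-1 *: ((H \o shift x) (h *: v) - H x).
  exact: (cvgr_gt _ (dH : _ @ (0:R)^' --> derive H x v) _ DH0).
move: (near_line v hn) q0 => [d1 d10 Hd1] [d2 d20 Hd2].
pose b := Num.min d1 d2 / 2.
have b0 : 0 < b by rewrite divr_gt0 // lt_min d10.
have inb r : 0 <= r -> r <= b -> ball (0:R) d1 r /\ ball (0:R) d2 r.
  move=> r0 rb; rewrite /ball /= sub0r normrN ger0_norm //.
  have m1 : Num.min d1 d2 <= d1 by rewrite ge_min lexx.
  have m2 : Num.min d1 d2 <= d2 by rewrite ge_min lexx orbT.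
  have : b < Num.min d1 d2 by rewrite /b ltr_pdivrMr // ltr_pMr ?lt_min ?d10 // ltr1n.
  by split; lra.
have [c] : exists2 c, c \in `]0, b[%R &
    f (b *: v + x) - f (0 *: v + x) = H (c *: v + x) * (b - 0).
  apply: (@MVT R (fun r : R => f (r *: v + x)) (fun r : R => H (r *: v + x)) 0 b b0).
    move=> r; rewrite in_itv /= => /andP[r0 rb].
    have [/Hd1 [_ dr <-] _] := inb r (ltW r0) (ltW rb).
    exact: is_derive_line.
  apply: derivable_within_continuous => r; rewrite in_itv /= => /andP[r0 rb].
  have [/Hd1 [_ dr _] _] := inb r r0 rb.
  by have [] := @is_derive_line f x v r dr.
rewrite in_itv /= => /andP[c0 cb]; rewrite scale0r add0r subr0 => E.
have Hc : 0 < H (c *: v + x).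
  have [_ /Hd2 /(_ (lt0r_neq0 c0))] := inb c (ltW c0) (ltW cb).
  rewrite /= Hx0 subr0 /shift /= addrC => /(mulr_gt0 c0).
  by rewrite /GRing.scale /= mulrA mulfV ?mul1r // lt0r_neq0.
have [/Hd1 [fb _ _] _] := inb b (ltW b0) (lexx b).
have : 0 < f (b *: v + x) - f x by rewrite E mulr_gt0.
by rewrite subr_gt0 ltNge fb.
Qed.

End DirectionalDerivative.

Lemma within_continuous_closure_le0 {R : realType} {T : topologicalType}
    {A : set T} {f : T -> R} {q : T} :
  {within A, continuous f} -> A q ->
  closure (A `&` [set r | f r <= 0]) q -> f q <= 0.
Proof.
move=> cf Aq cl; rewrite leNgt; apply/negP => fq0.
have /cvgr_gt /(_ _ fq0) N := (proj1 (subspace_continuousP _ _) cf) q Aq.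
have [r [[Ar fr] Nr]] := cl _ N.
by move: (Nr Ar); rewrite ltNge fr.
Qed.

Lemma compact_closure_bounded {R : realType} {n} {A : set 'rV[R]_n} :
  bounded_set A -> compact (closure A).
Proof.
move=> [M [Mreal HM]].
have sub : closure A `<=` closed_ball_ Num.norm 0 (M + 1).
  rewrite [X in _ `<=` X](closure_id _).1; last exact: closed_closed_ball_.
  apply: closureS => x Ax; rewrite /closed_ball_ /= ?sub0r ?normrN.
  by apply: (HM (M + 1)) => //; rewrite ltrDl.
apply: bounded_closed_compact; last exact: closed_closure.
exists (M + 1); split; first by rewrite realD // real1.
move=> y My x /sub; rewrite /closed_ball_ /= ?sub0r ?normrN => /le_trans; apply.
exact: ltW.
Qed.

Lemma le0_mul_gt0 (R : realFieldType) (d c : R) :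
  0 <= c -> (forall e, 0 < e -> d <= e * c) -> d <= 0.
Proof.
move=> c0 H; rewrite leNgt; apply/negP => d0.
have c1 : 0 < c + 1 by rewrite ltr_wpDl.
have := H (d / (c + 1)) (divr_gt0 d0 c1).
rewrite mulrAC ler_pdivlMr // mulrDr mulr1.
lra.
Qed.

Lemma C21S {R : realType} {n} {D D' : set 'rV[R]_n} {I I' : set R}
    {w : 'rV[R]_n -> R -> R} :
  D' `<=` D -> I' `<=` I -> C21 D I w -> C21 D' I' w.
Proof. by move=> DD' II' wC x t /DD' Dx /II' It; exact: wC. Qed.

Section Comparison.
Variables (R : realType) (n : nat).
Notation V := 'rV[R]_n.
Variables (om : set V) (t1 t2 : R) (G : R -> R) (v w : V -> R -> R).
Hypotheses (om_open : open om) (om_closure_compact : compact (closure om)).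
Hypothesis t1_lt_t2 : t1 < t2.
Hypotheses (v_C21 : C21 om [set t | t1 < t < t2] v)
  (w_C21 : C21 om [set t | t1 < t < t2] w).
Hypotheses (v_cont : Cset (closure om `*` [set t | t1 <= t <= t2]) v)
  (w_cont : Cset (closure om `*` [set t | t1 <= t <= t2]) w).
Hypothesis v_sub : forall x t, om x -> t1 < t < t2 ->
  dt v x t - lap_x v x t <= G (gradsq_x v x t).
Hypothesis w_super : forall x t, om x -> t1 < t < t2 ->
  G (gradsq_x w x t) <= dt w x t - lap_x w x t.
Hypothesis vw_lateral : forall x t, (closure om `\` om) x -> t1 < t < t2 ->
  v x t <= w x t.
Hypothesis vw_initial : forall x, om x -> v x t1 <= w x t1.

Local Notation cyl T := (closure om `*` [set s | t1 <= s <= T]).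
Local Notation diff := (fun q : V * R => v q.1 q.2 - w q.1 q.2).

Lemma cyl_compact T : compact (cyl T).
Proof.
apply: compact_setX => //.
have -> : [set s | t1 <= s <= T] = `[t1, T]%classic.
  by apply/seteqP; split => s /=; rewrite in_itv.
exact: segment_compact.
Qed.

Lemma diff_continuous {T} : T <= t2 -> {within cyl T, continuous diff}.
Proof.
move=> Tt2.
have sub : cyl T `<=` closure om `*` [set t | t1 <= t <= t2].
  by move=> [y s] [/= cy /andP[t1s sT]]; split => //=; rewrite t1s (le_trans sT Tt2).
move=> q; apply: (@continuousB _ _ (subspace (cyl T)) (uncurry2 v) (uncurry2 w)).
  exact: (continuous_subspaceW sub v_cont).
exact: (continuous_subspaceW sub w_cont).
Qed.

Lemma initial_closure x : closure om x -> v x t1 <= w x t1.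
Proof.
move=> cx; rewrite -subr_le0.
have cylx : cyl t1 (x, t1) by split => //=; rewrite lexx.
apply: (within_continuous_closure_le0 (diff_continuous (ltW t1_lt_t2)) cylx).
move=> N [[N1 N2] /= [N1x N2t] sub].
have [y [omy N1y]] := cx _ N1x.
exists (y, t1); split; last by apply: sub; split => //; exact: nbhs_singleton.
split; first by split => /=; [exact: subset_closure | rewrite lexx].
by rewrite /= subr_le0; exact: vw_initial.
Qed.

Lemma dt_le_at_spatial_max x0 t0 : om x0 -> t1 < t0 < t2 ->
  (forall y, om y -> v y t0 - w y t0 <= v x0 t0 - w x0 t0) ->
  dt v x0 t0 <= dt w x0 t0.
Proof.
move=> omx0 t0in ymax.
have [_ dvx dvxx _ _] := v_C21 x0 t0 omx0 t0in.
have [_ dwx dwxx _ _] := w_C21 x0 t0 omx0 t0in.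
have omN : \forall y \near x0, om y by apply: open_nbhs_nbhs; split.
have grad i : dx v i x0 t0 = dx w i x0 t0.
  apply/eqP; rewrite -subr_eq0; apply/eqP.
  rewrite /dx /partial -deriveB //.
  apply: derive_local_max; first exact: derivableB.
  by apply: filterS omN => y /ymax.
have lapi i : dxx v i i x0 t0 <= dxx w i i x0 t0.
  rewrite -subr_le0 /dxx /partial -deriveB //.
  apply: (@derive2_local_max _ _ ((fun y => v y t0) - (fun y => w y t0))); last first.
    exact: derivableB.
  apply: filterS omN => y omy.
  have [_ dvy _ _ _] := v_C21 y t0 omy t0in.
  have [_ dwy _ _ _] := w_C21 y t0 omy t0in.
  by split; [exact: ymax | exact: derivableB | rewrite deriveB].
have lap_le : lap_x v x0 t0 <= lap_x w x0 t0.
  by rewrite /lap_x /lap; apply: ler_sum => i _; exact: lapi.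
have grad_eq : gradsq_x v x0 t0 = gradsq_x w x0 t0.
  by rewrite /gradsq_x /gradsq; apply: eq_bigr => i _; have := grad i; rewrite /dx => ->.
have := v_sub x0 t0 omx0 t0in; have := w_super x0 t0 omx0 t0in.
rewrite grad_eq; lra.
Qed.

Lemma dt_ge_at_time_max x0 t0 eps : om x0 -> t1 < t0 < t2 ->
  (forall s, t1 < s <= t0 ->
     v x0 s - w x0 s - eps * (s - t1) <= v x0 t0 - w x0 t0 - eps * (t0 - t1)) ->
  eps <= dt v x0 t0 - dt w x0 t0.
Proof.
move=> omx0 t0in tmax; have /andP[t1t0 _] := t0in.
have [dvt _ _ _ _] := v_C21 x0 t0 omx0 t0in.
have [dwt _ _ _ _] := w_C21 x0 t0 omx0 t0in.
rewrite /dt !derive1E -deriveB //.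
apply: derive_ge_left; first exact: derivableB.
exists (t0 - t1); first by rewrite /= subr_gt0.
move=> h /=; rewrite sub0r normrN => hb hneg.
rewrite -[h *: 1]/(h * 1) mulr1.
have : t1 < h + t0 <= t0 by move: hb; rewrite ltr0_norm // => hb; apply/andP; split; lra.
move/tmax; rewrite !mulrBr mulrDr => sle.
by change (v x0 (h + t0) - w x0 (h + t0) - (v x0 t0 - w x0 t0) <= eps * h); lra.
Qed.

Lemma perturbed_le T eps x t : T < t2 -> 0 < eps -> closure om x -> t1 <= t <= T ->
  v x t - w x t <= eps * (t - t1).
Proof.
move=> Tt2 eps0 cx tT; rewrite -subr_le0.
pose z q := diff q - eps * (q.2 - t1).
have cz : {within cyl T, continuous z}.
  move=> q; apply: (@continuousB _ _ (subspace (cyl T)) diff (fun q => eps * (q.2 - t1))).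
    exact: (diff_continuous (ltW Tt2)).
  apply: continuous_subspaceT => {}q.
  apply: (@continuousM _ _ (fun=> eps) (fun q : V * R => q.2 - t1)).
    exact: cst_continuous.
  apply: (@continuousB _ _ _ (fun q : V * R => q.2) (fun=> t1)); last exact: cst_continuous.
  exact: cvg_snd.
have cylxt : cyl T (x, t) by [].
have [[x0 t0] /set_mem [/= cx0 /andP[t1t0 t0T]] zmax] :=
  compact_EVT_max (ex_intro _ _ cylxt) (cyl_compact T) cz.
apply: le_trans (zmax (x, t) _) _; first by rewrite inE.
rewrite /z /=; have [->|t0_neq_t1] := eqVneq t0 t1.
  by rewrite subrr mulr0 subr0 subr_le0; exact: initial_closure.
have t0in : t1 < t0 < t2 by rewrite lt_neqAle eq_sym t0_neq_t1 t1t0 (le_lt_trans t0T Tt2).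
have : 0 <= eps * (t0 - t1) by apply: mulr_ge0; [exact: ltW | rewrite subr_ge0].
have [omx0 | nomx0] := pselect (om x0); last first.
  by have := vw_lateral x0 t0 (conj cx0 nomx0) t0in; lra.
have space_max y : om y -> v y t0 - w y t0 <= v x0 t0 - w x0 t0.
  move=> omy; have : (y, t0) \in cyl T.
    by rewrite inE; split; [exact: subset_closure | rewrite /= t1t0].
  by move/zmax; rewrite /z /= lerD2r.
have time_max s : t1 < s <= t0 ->
    v x0 s - w x0 s - eps * (s - t1) <= v x0 t0 - w x0 t0 - eps * (t0 - t1).
  move=> /andP[t1s st0]; have : (x0, s) \in cyl T.
    by rewrite inE; split => //=; rewrite (ltW t1s) (le_trans st0 t0T).
  by move/zmax.
have := dt_ge_at_time_max x0 t0 eps omx0 t0in time_max.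
have := dt_le_at_spatial_max x0 t0 omx0 t0in space_max; lra.
Qed.

Lemma comparison_before x t : closure om x -> t1 <= t < t2 -> v x t <= w x t.
Proof.
move=> cx /andP[t1t tt2]; rewrite -subr_le0.
apply: (@le0_mul_gt0 _ _ (t - t1)); first by rewrite subr_ge0.
by move=> eps eps0; apply: perturbed_le tt2 eps0 cx _; rewrite t1t lexx.
Qed.

Lemma classical_comparison x t : closure om x -> t1 <= t <= t2 -> v x t <= w x t.
Proof.
move=> cx /andP[t1t tt2]; have [tlt|tge] := ltP t t2.
  by apply: comparison_before; rewrite ?t1t.
have -> : t = t2 by apply/eqP; rewrite eq_le tt2.
rewrite -subr_le0.
have cylx : cyl t2 (x, t2) by split => //=; rewrite (ltW t1_lt_t2) lexx.
apply: (within_continuous_closure_le0 (diff_continuous (lexx t2)) cylx).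
move=> N [[N1 N2] /= [N1x [e e0 N2t]] sub].
pose s := t2 - Num.min e (t2 - t1) / 2.
have : Num.min e (t2 - t1) <= e by rewrite ge_min lexx.
have : Num.min e (t2 - t1) <= t2 - t1 by rewrite ge_min lexx orbT.
have : 0 < Num.min e (t2 - t1) by rewrite lt_min e0 subr_gt0.
move=> m0 mt me; have s1 : t1 < s by rewrite /s; lra.
have s2 : s < t2 by rewrite /s; lra.
exists (x, s); split.
- split; first by split => //=; rewrite !ltW.
  by rewrite /= subr_le0; apply: comparison_before; rewrite ?ltW.
- apply: sub; split => /=; first exact: nbhs_singleton.
  apply: N2t; rewrite /= /s opprB addrC subrK ger0_norm; first lra.
  by rewrite divr_ge0 // ltW.
Qed.

End Comparison.

Lemma trunc_sol_le_supersolution (R : realType) (n : nat) (Om : set 'rV[R]_n)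
    (p : R) (k : nat) (phi : 'rV[R]_n -> R) (v u : 'rV[R]_n -> R -> R)
    (om : set 'rV[R]_n) (t1 t2 : R) (w : 'rV[R]_n -> R -> R) :
  trunc_classical_sol Om p k phi v ->
  (forall x t, closure Om x -> 0 <= t -> v x t <= u x t) ->
  open om -> om `<=` Om -> compact (closure om) -> 0 <= t1 -> t1 < t2 ->
  C21 om [set t | t1 < t < t2] w ->
  Cset (closure om `*` [set t | t1 <= t <= t2]) w ->
  (forall x t, om x -> t1 < t < t2 ->
     gradsq_x w x t `^ (p / 2) <= dt w x t - lap_x w x t) ->
  (forall x t, (closure om `&` (closure Om `\` Om)) x -> t1 < t < t2 -> 0 <= w x t) ->
  (forall x t, (Om `&` (closure om `\` om)) x -> t1 < t < t2 -> u x t <= w x t) ->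
  (forall x, om x -> u x t1 <= w x t1) ->
  forall x t, closure om x -> t1 <= t <= t2 -> v x t <= w x t.
Proof.
move=> [v_C21 [v_cont [_ [v_eq [v_bdry _]]]]] v_le_u om_open om_Om om_compact t1_ge0 t12
  w_C21 w_cont w_super w_bdry w_lateral w_initial.
have cOm : closure om `<=` closure Om := closureS om_Om.
have v_C21' : C21 om [set s | t1 < s < t2] v.
  by apply: C21S v_C21 => // s /andP[t1s _]; exact: le_lt_trans t1s.
have v_cont' : Cset (closure om `*` [set s | t1 <= s <= t2]) v.
  apply: continuous_subspaceW v_cont => -[y s] [/= cy /andP[t1s _]].
  by split; [exact: cOm | exact: le_trans t1s].
have v_sub y s : om y -> t1 < s < t2 ->
    dt v y s - lap_x v y s <= gradsq_x v y s `^ (p / 2).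
  move=> omy /andP[t1s _].
  rewrite v_eq; [by rewrite /Fk ge_min lexx | exact: om_Om | exact: le_lt_trans t1s].
have v_lateral y s : (closure om `\` om) y -> t1 < s < t2 -> v y s <= w y s.
  move=> [cy nomy] sI; have s_gt0 : 0 < s by case/andP: sI => + _; exact: le_lt_trans.
  have [Omy | nOmy] := pselect (Om y).
    apply: le_trans (w_lateral y s (conj Omy (conj cy nomy)) sI).
    by apply: v_le_u; [exact: cOm | exact: ltW].
  have y_bdry : (closure Om `\` Om) y by split => //; exact: cOm.
  by rewrite v_bdry //; apply: w_bdry.
have v_initial y : om y -> v y t1 <= w y t1.
  move=> omy; apply: le_trans (w_initial y omy).
  by apply: v_le_u => //; exact/cOm/subset_closure.
exact: (@classical_comparison R n om t1 t2 (fun s => s `^ (p / 2)) v w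
  om_open om_compact t12 v_C21' w_C21 v_cont' w_cont v_sub w_super
  v_lateral v_initial).
Qed.

Theorem proposition2p2 (R : realType) (n : nat) (Om : set 'rV[R]_n) (p : R)
    (phi : 'rV[R]_n -> R) (u : 'rV[R]_n -> R -> R)
    (om : set 'rV[R]_n) (t1 t2 : R) (w : 'rV[R]_n -> R -> R) :
  smoothly_bounded Om -> 2 < p ->
  Xdata Om phi ->
  global_viscosity_sol Om p phi u ->
  open om -> om `<=` Om -> 0 <= t1 -> t1 < t2 ->
  C21 om [set t | t1 < t < t2] w ->
  Cset (closure om `*` [set t | t1 <= t <= t2]) w ->
  (forall x t, om x -> t1 < t < t2 ->
     dt w x t - lap_x w x t >= gradsq_x w x t `^ (p / 2)) ->
  (forall x t, (closure om `&` (closure Om `\` Om)) x -> t1 < t < t2 -> 0 <= w x t) ->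
  (forall x t, (Om `&` (closure om `\` om)) x -> t1 < t < t2 -> u x t <= w x t) ->
  (forall x, om x -> u x t1 <= w x t1) ->
  forall x t, closure om x -> t1 <= t <= t2 -> u x t <= w x t.
Proof.
move=> [_ [Om_bounded _]] _ _ [uk [uk_sol uk_lim]] om_open om_Om t1_ge0 t12
  w_C21 w_cont w_super w_bdry w_lateral w_initial x t cx tt.
have cOm : closure om `<=` closure Om := closureS om_Om.
have om_compact : compact (closure om).
  exact: subclosed_compact (@closed_closure _ om) (compact_closure_bounded Om_bounded) cOm.
have uk_le_u k y s : closure Om y -> 0 <= s -> uk k y s <= u y s.
  move=> cy s0; have [uk_mono uk_cvg] := uk_lim y s cy s0.
  by apply: (cvgr_to_ge uk_cvg); exists k => // l /= kl; exact: uk_mono.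
have t_ge0 : 0 <= t by case/andP: tt => + _; exact: le_trans.
apply: (cvgr_to_le (uk_lim x t (cOm x cx) t_ge0).2); apply: nearW => k.
exact: (@trunc_sol_le_supersolution R n Om p k phi (uk k) u om t1 t2 w
  (uk_sol k) (uk_le_u k) om_open om_Om om_compact t1_ge0 t12
  w_C21 w_cont w_super w_bdry w_lateral w_initial x t cx tt).
Qed.
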